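(* Let $D$ be a digraph with at least one cycle, and let $c$ and $g$ be its circumference and girth, respectively. Then $\chi_A(D)\le \left\lceil \frac{c-1}{g-1}\right\rceil+1$.
   Context: Digraphs are finite and loopless; paths and cycles are directed. The girth (resp. circumference) of a digraph is the length of a shortest (resp. longest) directed cycle. A set of vertices is acyclic if the subdigraph it induces contains no directed cycle. The dichromatic number $\chi_A(D)$ is the minimum $k$ such that $V(D)$ can be colored with $k$ colors so that every color class is acyclic. *)

From mathcomp Require Import all_boot.
Set Implicit Arguments. Unset Strict Implicit. Unset Printing Implicit Defensive.

Definition loopless (V : finType) (e : rel V) : Prop := forall v, ~~ e v v.

(* A directed cycle: a nonempty duplicate-free sequence [v0; ...; v_{k-1}]
   with arcs v_i -> v_{i+1} and v_{k-1} -> v0.  Its length is size s. *)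
Definition dcycle (V : finType) (e : rel V) (s : seq V) : bool :=
  [&& s != [::], uniq s & cycle e s].

Definition has_cycle (V : finType) (e : rel V) : Prop :=
  exists s, dcycle e s.

Definition is_girth (V : finType) (e : rel V) (g : nat) : Prop :=
  (exists2 s, dcycle e s & size s = g) /\
  (forall s, dcycle e s -> g <= size s).

Definition is_circumference (V : finType) (e : rel V) (c : nat) : Prop :=
  (exists2 s, dcycle e s & size s = c) /\
  (forall s, dcycle e s -> size s <= c).

Definition acyclic_set (V : finType) (e : rel V) (A : {set V}) : Prop :=
  forall s, dcycle e s -> ~ {subset s <= A}.

Definition dicolorable (V : finType) (e : rel V) (k : nat) : Prop :=
  exists f : V -> 'I_k, forall i : 'I_k, acyclic_set e [set v | f v == i].

Definition is_dichromatic_number (V : finType) (e : rel V) (chi : nat) : Prop :=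
  dicolorable e chi /\ (forall k, dicolorable e k -> chi <= k).

Definition ceil_div (m d : nat) : nat := (m + d.-1) %/ d.

From mathcomp Require Import all_boot zify.
Set Implicit Arguments. Unset Strict Implicit. Unset Printing Implicit Defensive.

(* A depth-first search assigns every vertex its depth [dp] in the DFS forest,
   and every directed cycle contains a back arc [u -> w] where [w] is an
   ancestor of [u]; the tree path from [w] to [u] closes with that arc to a
   cycle of length [dp u - dp w + 1], which lies between the girth [g] and the
   circumference [c].  Colouring [v] by [dp v %/ (g - 1)] modulo
   [ceil((c - 1) / (g - 1)) + 1] therefore separates the ends of every back
   arc, so no colour class contains a cycle. *)

Section DepthFirstSearch.
Variables (V : finType) (e : rel V).

Definition arc_into (U : {set V}) : rel V := fun a b => e a b && (b \in U).

Definition reachable_in (U : {set V}) (x v : V) : bool :=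
  (x \in U) && connect (arc_into U) x v.

Definition reachable_from (U X : {set V}) (v : V) : Prop :=
  exists2 x, x \in X & reachable_in U x v.

Definition depth_path (U : {set V}) (dp : V -> nat) (x v : V) (d : nat) : Prop :=
  exists p, [/\ path e x p, {subset x :: p <= U}, uniq (x :: p),
                last x p = v & dp v = d + size p].

Definition has_back_arc (dp : V -> nat) (s : seq V) : Prop :=
  exists u w, [/\ u \in s, w \in s, e u w & depth_path setT dp w u (dp w)].

(* [dp] is the depth function of a DFS of the subdigraph induced by [U],
   started from the roots [X] placed at depth [d]. *)
Definition dfs_depth (U X : {set V}) (d : nat) (dp : V -> nat) : Prop :=
  (forall v, reachable_from U X v -> exists2 x, x \in X & depth_path U dp x v d)
  /\ (forall s, dcycle e s -> {subset s <= U} ->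
        {in s, forall v, reachable_from U X v} -> has_back_arc dp s).

Lemma path_arc_intoE (U : {set V}) x p :
  path (arc_into U) x p = path e x p && all (mem U) p.
Proof.
by elim: p x => //= y p IHp x; rewrite IHp /arc_into -!andbA; do 2!bool_congr.
Qed.

Lemma reachable_in_trans (U : {set V}) x y v :
  reachable_in U x y -> connect (arc_into U) y v -> reachable_in U x v.
Proof. by case/andP=> xU xy yv; rewrite /reachable_in xU (connect_trans xy yv). Qed.

Lemma reachable_from1 (U : {set V}) r v :
  reachable_from U [set r] v -> reachable_in U r v.
Proof. by case=> x; rewrite inE => /eqP ->. Qed.

Lemma reachable_in_split (U : {set V}) r v :
  reachable_in U r v -> v != r -> exists2 y, e r y & reachable_in (U :\ r) y v.
Proof.
case/andP=> rU /connectP [p rp ->]; case: (shortenP rp) => [[|y q]] /=.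
  by rewrite eqxx.
rewrite path_arc_intoE => /and3P [/andP [ery yU] yq qU] /andP [rNyq _] _ _.
have yqUr : all (mem (U :\ r)) (y :: q).
  apply/allP=> z yq_z; rewrite !inE.
  have -> : z != r by apply: contraNneq rNyq => <-.
  by move: yq_z; rewrite inE => /predU1P [-> // | /(allP qU)].
have yUr : y \in U :\ r := allP yqUr y (mem_head _ _).
exists y => //; rewrite /reachable_in yUr.
by apply/connectP; exists q; rewrite // path_arc_intoE yq; case/andP: yqUr.
Qed.

Lemma connect_avoid_reachable (U : {set V}) x y v :
  connect (arc_into U) y v -> ~~ reachable_in U x v ->
  connect (arc_into (U :\: [set z | reachable_in U x z])) y v.
Proof.
case/connectP=> p yp ->; elim: p y yp => [|z p IHp] y //= /andP [yz zp] xNv.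
have xNz : ~~ reachable_in U x z.
  apply: contra xNv => xz; apply: reachable_in_trans xz _.
  by apply/connectP; exists p.
apply: connect_trans (connect1 _) (IHp _ zp xNv).
by move: yz; rewrite /arc_into !inE xNz => /andP [-> ->].
Qed.

Lemma depth_path_widen (U1 U2 : {set V}) dp1 dp2 x v d :
  U1 \subset U2 -> dp1 v = dp2 v ->
  depth_path U1 dp1 x v d -> depth_path U2 dp2 x v d.
Proof.
move=> /subsetP U12 dp12 [p [xp xpU uniq_xp last_v dp_v]].
by exists p; split=> // [z /xpU/U12 // | ]; rewrite -dp12.
Qed.

Lemma depth_path_cons (U : {set V}) dp r x v d :
  r \in U -> e r x -> depth_path (U :\ r) dp x v d.+1 -> depth_path U dp r v d.
Proof.
move=> rU erx [p [xp xpU uniq_xp <- dp_v]].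
exists (x :: p); split; rewrite /= ?erx //.
- by move=> z /predU1P [-> // | /xpU]; rewrite inE => /andP [].
- by apply/andP; split=> //; apply/negP => /xpU; rewrite !inE eqxx.
- by rewrite dp_v addSnnS.
Qed.

Lemma eq_in_has_back_arc dp1 dp2 s :
  {in s, dp1 =1 dp2} -> has_back_arc dp1 s -> has_back_arc dp2 s.
Proof.
move=> dp12 [u [w [us ws euw wu]]]; exists u, w; split=> //.
by rewrite -dp12 //; apply: depth_path_widen wu; rewrite ?subxx ?dp12.
Qed.

Lemma dfs_depth_root (U : {set V}) r d dp :
  r \in U -> dfs_depth (U :\ r) [set y | e r y] d.+1 dp ->
  dfs_depth U [set r] d (fun v => if v == r then d else dp v).
Proof.
move=> rU [dp_path dp_back]; set dpr := fun v => _.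
have path_r v : reachable_in U r v -> depth_path U dpr r v d.
  move=> rv; case: (eqVneq v r) => [-> | vNr].
    exists [::]; split=> //=; last by rewrite /dpr eqxx addn0.
    by move=> z; rewrite inE => /eqP ->.
  have [y ery yv] := reachable_in_split rv vNr.
  have Nr_y : y \in [set y | e r y] by rewrite inE.
  have [x /[!inE] erx xv] := dp_path v (ex_intro2 _ _ y Nr_y yv).
  apply: depth_path_cons rU erx (depth_path_widen (subxx _) _ xv).
  by rewrite /dpr (negbTE vNr).
split=> [v /reachable_from1 rv | s cyc_s sU s_reach].
  by exists r; [rewrite inE | apply: path_r].
case: (boolP (r \in s)) => [rs | rNs].
  have [_ _ cycle_s] := and3P cyc_s.
  have us : prev s r \in s by rewrite mem_prev.
  exists (prev s r), r; split; rewrite ?prev_cycle //.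
  have -> : dpr r = d by rewrite /dpr eqxx.
  exact: depth_path_widen (subsetT _) _ (path_r _ (reachable_from1 (s_reach _ us))).
have sNr z : z \in s -> z != r by move=> zs; apply: contraNneq rNs => <-.
apply: eq_in_has_back_arc (dp_back s cyc_s _ _).
- by move=> z /sNr zNr; rewrite /dpr (negbTE zNr).
- by move=> z zs; rewrite !inE sNr ?sU.
move=> z zs; have rz := reachable_from1 (s_reach z zs).
by have [y ery yz] := reachable_in_split rz (sNr z zs); exists y; rewrite ?inE.
Qed.

Lemma dfs_depth_union (U X : {set V}) x d dp1 dp2 :
  x \in X -> dfs_depth U [set x] d dp1 ->
  dfs_depth (U :\: [set v | reachable_in U x v]) X d dp2 ->
  dfs_depth U X d (fun v => if reachable_in U x v then dp1 v else dp2 v).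
Proof.
move=> xX [dp1_path dp1_back] [dp2_path dp2_back].
set R := [set v | reachable_in U x v].
have from_rest v : reachable_from U X v -> ~~ reachable_in U x v ->
    reachable_from (U :\: R) X v.
  move=> [y yX /andP [yU yv]] xNv; exists y => //.
  have yNR : y \notin R.
    by rewrite inE; apply: contra xNv => xy; apply: reachable_in_trans xy yv.
  by rewrite /reachable_in in_setD yNR yU; apply: connect_avoid_reachable.
split=> [v Xv | s cyc_s sU s_reach].
  case: (boolP (reachable_in U x v)) => [xv | xNv].
    have [y /[!inE] /eqP -> xv_path] := dp1_path v (ex_intro2 _ _ x (set11 x) xv).
    by exists x => //; apply: depth_path_widen xv_path; rewrite ?subxx ?xv.
  have [y yX yv] := dp2_path v (from_rest v Xv xNv).
  exists y => //; apply: depth_path_widen yv; rewrite ?subsetDl //.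
  by rewrite (negbTE xNv).
case: (boolP (has (reachable_in U x) s)) => [/hasP [v vs xv] | /hasPn xNs].
  have xs : {in s, forall z, reachable_in U x z}.
    have [_ _ cycle_s] := and3P cyc_s.
    move=> z zs; apply: reachable_in_trans xv _; apply: (connect_cycle _ vs zs).
    apply: (sub_in_cycle (P := mem U)) cycle_s; last exact/allP.
    by move=> a b _ bU eab; rewrite /arc_into eab.
  apply: eq_in_has_back_arc (dp1_back s cyc_s sU _) => [z zs | z zs].
    by rewrite xs.
  by exists x; rewrite ?inE ?xs.
apply: eq_in_has_back_arc (dp2_back s cyc_s _ _) => [z zs | z zs | z zs].
- by rewrite (negbTE (xNs z zs)).
- by rewrite !inE xNs ?sU.
- by apply: from_rest; [apply: s_reach | apply: xNs].
Qed.

(* Visiting a root [x], its subtree is a DFS of [U :\ x] from the out-neighbours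
   of [x] one level deeper; the search then resumes on the unvisited vertices. *)
Lemma dfs_depth_exists (U X : {set V}) d : exists dp, dfs_depth U X d dp.
Proof.
have [n] := ubnP #|U|; elim: n => // n IHn in U X d *; rewrite ltnS => leUn.
case: (pickP (mem (X :&: U))) => [x /[!inE] /andP [xX xU] | noXU]; last first.
  have XNU v : ~ reachable_from U X v.
    by case=> y yX /andP [yU _]; move: (noXU y); rewrite !inE yX yU.
  exists (fun _ => 0); split=> [v /XNU // | [|v s] /and3P [] // _ _ _ _ s_reach].
  by case: (XNU v (s_reach v (mem_head v s))).
have [dp1 dfs1] : exists dp, dfs_depth (U :\ x) [set y | e x y] d.+1 dp.
  by apply: IHn; rewrite (cardsD1 x U) xU in leUn.
set R := [set v | reachable_in U x v].
have [dp2 dfs2] : exists dp, dfs_depth (U :\: R) X d dp.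
  apply: IHn; apply: leq_trans leUn; apply: proper_card; apply/properP.
  by split; [apply: subsetDl | exists x; rewrite ?inE /reachable_in ?xU ?connect0].
by eexists; apply: dfs_depth_union xX (dfs_depth_root xU dfs1) dfs2.
Qed.

Lemma exists_back_arc_depth : exists dp, forall s, dcycle e s -> has_back_arc dp s.
Proof.
have [dp [_ dp_back]] := dfs_depth_exists setT setT 0.
exists dp => s cyc_s; apply: (dp_back s cyc_s) => [v _ | v _]; first by rewrite inE.
by exists v; rewrite /reachable_in ?inE ?connect0.
Qed.

Lemma dcycle_of_path w p : path e w p -> uniq (w :: p) -> e (last w p) w ->
  dcycle e (w :: p).
Proof. by move=> wp uniq_wp ew; rewrite /dcycle uniq_wp /= rcons_path wp ew. Qed.

Lemma loopless_dcycle_size s : loopless e -> dcycle e s -> 1 < size s.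
Proof.
case: s => [|x [|y s]] // loop_free /and3P [_ _] /=.
by rewrite andbT (negbTE (loop_free x)).
Qed.

End DepthFirstSearch.

Lemma leq_ceil_div_mul m d : 0 < d -> m <= ceil_div m d * d.
Proof.
move=> d_gt0; rewrite /ceil_div.
have := ltn_mod (m + d.-1) d; have := divn_eq (m + d.-1) d; rewrite d_gt0; lia.
Qed.

Lemma divn_addr_neq_mod a t h k : 0 < h -> h <= t -> t <= k * h ->
  (a + t) %/ h != a %/ h %[mod k.+1].
Proof.
move=> h_gt0 le_h_t le_t_kh; rewrite {1}(divn_eq a h) -addnA divnMDl //.
set j := (a %% h + t) %/ h.
have j_gt0 : 0 < j by rewrite divn_gt0 // (leq_trans le_h_t) ?leq_addl.
have le_j_k : j <= k.
  rewrite /j -ltnS ltn_divLR //; have := ltn_mod a h; rewrite h_gt0; lia.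
by rewrite -{2}[a %/ h]addn0 eqn_modDl mod0n modn_small ?ltnS // -lt0n.
Qed.

Theorem theorem3 (V : finType) (e : rel V) (chi c g : nat) :
  loopless e ->
  has_cycle e ->
  is_circumference e c ->
  is_girth e g ->
  is_dichromatic_number e chi ->
  chi <= ceil_div (c - 1) (g - 1) + 1.
Proof.
move=> loop_free _ [_ le_circ] [[s0 cyc_s0 size_s0] ge_girth] [_ chi_min].
have g_gt1 : 1 < g by rewrite -size_s0 (loopless_dcycle_size loop_free cyc_s0).
set k := ceil_div (c - 1) (g - 1).
have k1_gt0 : 0 < k + 1 by rewrite addn1.
have [dp back_arc] := exists_back_arc_depth e.
apply: chi_min; exists (fun v => Ordinal (ltn_pmod (dp v %/ (g - 1)) k1_gt0)).
move=> i s cyc_s mono_s.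
have [u [w [us ws euw [p [wp _ uniq_wp lastu dp_u]]]]] := back_arc s cyc_s.
have cyc_wp : dcycle e (w :: p) by rewrite dcycle_of_path ?lastu.
have := ge_girth _ cyc_wp; have := le_circ _ cyc_wp; rewrite /= => le_p_c le_g_p.
move: (mono_s u us) (mono_s w ws); rewrite !inE => /eqP col_u /eqP col_w.
have /eqP := congr1 val (etrans col_u (esym col_w)); rewrite /= dp_u addn1.
apply/negP; apply: divn_addr_neq_mod; first by rewrite subn_gt0.
  by rewrite leq_subLR.
by apply: leq_trans (leq_ceil_div_mul _ _); rewrite ?subn_gt0 //; lia.
Qed.
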